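(* Let $\mathbf A\in\mathbb R^{n\times p}$ have columns with $\mathbf 1^T\mathbf a_k=0$ and $\|\mathbf a_k\|_2=1$ for $k=1,\dots,p$, and let $\rho_{ij}=\mathbf a_i^T\mathbf a_j$. Let $\mathbf y\in\mathbb R^n$, let $\mathbf w$ be a weight vector as in the context and $\Delta:=\min\{w_l-w_{l+1}: l=1,\dots,p-1\}$. Let $\widehat{\mathbf x}$ be any minimizer of $\|\mathbf A\mathbf x-\mathbf y\|_1+\Omega_{\mathbf w}(\mathbf x)$ over $\mathbf x\in\mathbb R^p$. Then for every pair $(i,j)$ with $\sqrt{n(2-2\rho_{ij}\operatorname{sign}(\widehat x_i\widehat x_j))}<\Delta$, we have $|\widehat x_i|=|\widehat x_j|$.
   Context: $\mathbf w=(w_1,\dots,w_p)\in\mathbb R^p_+$ satisfies $w_1\ge w_2\ge\cdots\ge w_p\ge0$ and $w_1>0$. The ordered weighted $\ell_1$ (OWL) norm is $\Omega_{\mathbf w}(\mathbf x)=\sum_{i=1}^p w_i|x|_{[i]}$, where $|x|_{[i]}$ denotes the $i$-th largest component of $\mathbf x$ in magnitude. $\mathbf a_k$ is the $k$-th column of $\mathbf A$, $\mathbf 1$ the all-ones vector, $\operatorname{sign}$ the sign function. *)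

From HB Require Import structures.
From mathcomp Require Import all_boot all_order all_algebra.
From mathcomp Require Import reals.
Set Implicit Arguments. Unset Strict Implicit. Unset Printing Implicit Defensive.
Import Order.TTheory GRing.Theory Num.Theory.
Local Open Scope ring_scope.

(* Weights are indexed from 0: w_1, ..., w_p of the paper are w 0, ..., w (p-1). *)

Definition sorted_abs (R : realType) (p : nat) (x : 'cV[R]_p) : seq R :=
  sort (fun a b : R => b <= a) [seq `|x k 0| | k <- enum 'I_p].

Definition owl (R : realType) (p : nat) (w : nat -> R) (x : 'cV[R]_p) : R :=
  \sum_(i < p) w i * nth 0 (sorted_abs x) i.

Definition l1norm (R : realType) (n : nat) (v : 'cV[R]_n) : R :=
  \sum_(r < n) `|v r 0|.

(* Delta = min { w_l - w_{l+1} : l = 1..p-1 }  (meaningful for p >= 2; the seed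
   w_1 - w_2 is itself one of the terms) *)
Definition owl_gap (R : realType) (p : nat) (w : nat -> R) : R :=
  \big[Num.min/(w 0%N - w 1%N)]_(l < p.-1) (w l - w l.+1).

Definition col_corr (R : realType) (n p : nat) (A : 'M[R]_(n, p)) (i j : 'I_p) : R :=
  \sum_(r < n) A r i * A r j.

(* If |x_i| > |x_j|, move e = (|x_i| - |x_j|)/4 of magnitude from x_i to x_j,
   along the signs s_i, s_j of the two entries.  The two magnitudes do not cross,
   so by the rearrangement inequality the OWL penalty drops by at least
   e (w_l - w_{l+1}) >= e Delta for some l, while the l1 loss grows by at most
   e |s_j a_j - s_i a_i|_1 <= e sqrt(n (2 - 2 s_i s_j rho_ij)) by Cauchy-Schwarz.
   The hypothesis makes the gain exceed the loss, contradicting minimality. *)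

From HB Require Import structures.
From mathcomp Require Import all_boot all_order all_algebra.
From mathcomp Require Import reals.
From mathcomp Require Import ring lra.
Import Order.TTheory GRing.Theory Num.Theory.
Local Open Scope ring_scope.
Set Implicit Arguments. Unset Strict Implicit. Unset Printing Implicit Defensive.

Section Rearrangement.
Variable R : realDomainType.

Local Notation geR := (fun a b : R => b <= a).

Lemma geR_trans : transitive geR.
Proof. by move=> b a c hba hcb; apply: le_trans hcb hba. Qed.

Lemma geR_anti : antisymmetric geR.
Proof. by move=> a b /andP[hba hab]; apply/le_anti; rewrite hab hba. Qed.

Lemma geR_total : total geR.
Proof. by move=> a b; rewrite orbC le_total. Qed.

Definition weighted_sum (w : nat -> R) (t : seq R) : R :=
  \sum_(k < size t) w k * t`_k.

Lemma weighted_sum_cons w a t :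
  weighted_sum w (a :: t) = w 0%N * a + weighted_sum (w \o succn) t.
Proof. by rewrite /weighted_sum /= big_ord_recl. Qed.

Lemma weighted_sum_map (T : Type) (x0 : T) w (f : T -> R) (s : seq T) :
  weighted_sum w (map f s) = \sum_(k < size s) w k * f (nth x0 s k).
Proof. by rewrite /weighted_sum size_map; apply: eq_bigr => k _; rewrite (nth_map x0). Qed.

Lemma weighted_sum_insert_le w a v u :
  (forall l, (l < size v)%N -> w l.+1 <= w l) ->
  sorted geR v -> sorted geR u -> perm_eq u (a :: v) ->
  weighted_sum w (a :: v) <= weighted_sum w u.
Proof.
elim: v w u => [|b v IHv] w u hw hv hu huv.
  by rewrite (sorted_eq geR_trans geR_anti hu _ huv).
have [hba|hab] := leP b a.
  have hsorted : sorted geR [:: a, b & v] by rewrite /= hba.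
  by rewrite (sorted_eq geR_trans geR_anti hu hsorted huv).
case: u hu huv => [|c u] hu huv; first by have := perm_size huv.
(* [c], the head of the sorted [u], is the maximum of [a :: b :: v], that is [b]. *)
have hbc : b <= c.
  have : b \in c :: u by rewrite (perm_mem huv) !inE eqxx orbT.
  rewrite inE => /orP[/eqP-> //|hbu].
  by move/allP: (order_path_min geR_trans hu) => /(_ b hbu).
have hcb : c = b.
  apply/le_anti; rewrite hbc andbT.
  have : c \in [:: a, b & v] by rewrite -(perm_mem huv) mem_head.
  rewrite !inE => /orP[/eqP hca|/orP[/eqP-> //|hcv]].
    by move: hab; rewrite -hca => /(le_lt_trans hbc); rewrite ltxx.
  by move/allP: (order_path_min geR_trans hv) => /(_ c hcv).
subst c.
have huav : perm_eq u (a :: v).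
  rewrite -(perm_cons b); apply: (perm_trans huv).
  by rewrite (perm_catCA [:: a] [:: b] v).
have IH := IHv (w \o succn) u (fun l hl => hw l.+1 hl) (path_sorted hv) (path_sorted hu) huav.
move: IH; rewrite !weighted_sum_cons /=.
have hw01 : w 1%N <= w 0%N by apply: hw.
have hswap : 0 <= (w 0%N - w 1%N) * (b - a) by apply: mulr_ge0; lra.
lra.
Qed.

Lemma weighted_sum_le_sorted w t u :
  (forall l, (l.+1 < size u)%N -> w l.+1 <= w l) ->
  sorted geR u -> perm_eq t u -> weighted_sum w t <= weighted_sum w u.
Proof.
elim: t w u => [|a t IHt] w u hw hu htu.
  by move: htu; rewrite perm_sym => /perm_nilP ->.
have hsize : size u = (size t).+1 by rewrite -(perm_size htu).
pose v := sort geR t.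
have htv : perm_eq t v by rewrite perm_sym perm_sort.
apply: (@le_trans _ _ (weighted_sum w (a :: v))).
  rewrite !weighted_sum_cons lerD2l; apply: IHt => //.
  - by move=> l hl; apply: hw; rewrite hsize; rewrite size_sort in hl.
  - exact: sort_sorted geR_total t.
apply: weighted_sum_insert_le.
- by move=> l hl; apply: hw; rewrite hsize ltnS; rewrite size_sort in hl.
- exact: sort_sorted geR_total t.
- exact: hu.
- by apply: perm_trans (_ : perm_eq u (a :: t)) _; rewrite ?perm_cons // perm_sym.
Qed.


Lemma sorted_index_lt (T : eqType) (f : T -> R) (ks : seq T) (i j : T) :
  sorted geR (map f ks) -> i \in ks -> j \in ks -> f j < f i ->
  (index i ks < index j ks)%N.
Proof.
move=> hsorted hi hj hfji; rewrite ltnNge; apply/negP => hji.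
have := sorted_leq_nth geR_trans (@lexx _ R) (f i) hsorted.
rewrite size_map => /(_ (index j ks) (index i ks)).
rewrite !inE !index_mem => /(_ hj hi hji).
rewrite !(nth_map i) ?index_mem // !nth_index //.
by rewrite leNgt hfji.
Qed.

Lemma weighted_sum_update2 (T : eqType) w (f g : T -> R) (ks : seq T) (i j : T) :
  uniq ks -> i \in ks -> j \in ks -> i != j ->
  (forall k, k != i -> k != j -> f k = g k) ->
  weighted_sum w (map f ks) - weighted_sum w (map g ks)
    = w (index i ks) * (f i - g i) + w (index j ks) * (f j - g j).
Proof.
move=> hks hi hj hij hfg.
rewrite !(weighted_sum_map i) -sumrB.
have hPi : (index i ks < size ks)%N by rewrite index_mem.
have hPj : (index j ks < size ks)%N by rewrite index_mem.
have hPij : Ordinal hPj != Ordinal hPi.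
  by rewrite -val_eqE /=; apply: contra hij => /eqP /(congr1 (nth i ks)); rewrite !nth_index // => ->.
rewrite (bigD1 (Ordinal hPi)) //= (bigD1 (Ordinal hPj)) //= big1 ?addr0.
  by rewrite !nth_index // -!mulrBr.
move=> k /andP[hki hkj].
have hnth (l : T) (hl : (index l ks < size ks)%N) : k != Ordinal hl -> nth i ks k != l.
  apply: contra => /eqP hkl; rewrite -val_eqE /= -hkl index_uniq //.
by rewrite hfg ?hnth // subrr.
Qed.
End Rearrangement.

Section OrderedWeightedL1.
Variables (R : realType) (p : nat) (w : nat -> R).
Hypothesis w_noninc : forall l, (l.+1 < p)%N -> w l.+1 <= w l.

Local Notation geR := (fun a b : R => b <= a).

Lemma w_noninc_le l m : (l <= m)%N -> (m < p)%N -> w m <= w l.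
Proof.
elim: m => [|m IHm]; first by rewrite leqn0 => /eqP->.
rewrite leq_eqVlt => /orP[/eqP-> //|hlm hm].
exact: le_trans (w_noninc hm) (IHm hlm (ltnW hm)).
Qed.

Definition abs_order (x : 'cV[R]_p) : seq 'I_p :=
  sort (relpre (fun k => `|x k 0|) geR) (enum 'I_p).

Lemma sorted_absE (x : 'cV[R]_p) :
  sorted_abs x = [seq `|x k 0| | k <- abs_order x].
Proof. exact: sort_map. Qed.

Lemma sorted_abs_sorted (x : 'cV[R]_p) : sorted geR (sorted_abs x).
Proof. exact: sort_sorted (@geR_total R) _. Qed.

Lemma owl_weighted_sum (x : 'cV[R]_p) : owl w x = weighted_sum w (sorted_abs x).
Proof. by rewrite /weighted_sum /sorted_abs size_sort size_map size_enum_ord. Qed.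

Lemma owl_ge_perm (x : 'cV[R]_p) (ks : seq 'I_p) :
  perm_eq ks (enum 'I_p) -> weighted_sum w [seq `|x k 0| | k <- ks] <= owl w x.
Proof.
move=> hks; rewrite owl_weighted_sum; apply: weighted_sum_le_sorted.
- by move=> l; rewrite /sorted_abs size_sort size_map size_enum_ord; apply: w_noninc.
- exact: sorted_abs_sorted.
- by rewrite /sorted_abs perm_sym perm_sort perm_sym perm_map.
Qed.

Lemma owl_gap_le l : (l.+1 < p)%N -> owl_gap p w <= w l - w l.+1.
Proof.
move=> hl; have hl' : (l < p.-1)%N by rewrite -ltnS (ltn_predK hl).
exact: (bigmin_le _ (Ordinal hl') (fun l : 'I_p.-1 => w l - w l.+1)).
Qed.

(* Both penalties are evaluated along the magnitude order of [x']: exactly for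
   [x'], and from below for [x] by the rearrangement inequality. *)
Lemma owl_transfer (x x' : 'cV[R]_p) (i j : 'I_p) (e : R) :
  0 <= e -> `|x' i 0| = `|x i 0| - e -> `|x' j 0| = `|x j 0| + e ->
  (forall k, k != i -> k != j -> `|x' k 0| = `|x k 0|) ->
  `|x' j 0| < `|x' i 0| ->
  exists2 l, (l.+1 < p)%N & owl w x' + e * (w l - w l.+1) <= owl w x.
Proof.
move=> he hx'i hx'j hx'k hlt.
have hij : i != j by apply: contraTneq hlt => ->; rewrite ltxx.
pose ks := abs_order x'.
have hks : perm_eq ks (enum 'I_p) by rewrite perm_sort.
have hmem k : k \in ks by rewrite (perm_mem hks) mem_enum.
have hPQ : (index i ks < index j ks)%N.
  apply: (sorted_index_lt (f := fun k => `|x' k 0|)) (hmem i) (hmem j) hlt.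
  by rewrite -sorted_absE sorted_abs_sorted.
have hQ : (index j ks < p)%N.
  by move: (index_mem j ks); rewrite hmem (perm_size hks) size_enum_ord.
exists (index i ks); first exact: leq_ltn_trans hPQ hQ.
have hks_uniq : uniq ks by rewrite (perm_uniq hks) enum_uniq.
have hdiff := weighted_sum_update2 w hks_uniq (hmem i) (hmem j) hij
  (fun k hki hkj => esym (hx'k k hki hkj)).
rewrite hx'i hx'j in hdiff.
have hwQ := w_noninc_le hPQ hQ.
have := owl_ge_perm x hks.
rewrite (owl_weighted_sum x') sorted_absE -/ks.
have : e * (w (index i ks) - w (index i ks).+1) <= e * (w (index i ks) - w (index j ks)).
  by apply: ler_wpM2l => //; lra.
lra.
Qed.

End OrderedWeightedL1.

Section L1Norm.
Variable R : realType.

Lemma l1norm_ge0 n (v : 'cV[R]_n) : 0 <= l1norm v.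
Proof. by apply: sumr_ge0 => r _. Qed.

Lemma l1normD n (u v : 'cV[R]_n) : l1norm (u + v) <= l1norm u + l1norm v.
Proof. by rewrite /l1norm -big_split; apply: ler_sum => r _; rewrite mxE ler_normD. Qed.

Lemma l1normZ n (a : R) (v : 'cV[R]_n) : l1norm (a *: v) = `|a| * l1norm v.
Proof. by rewrite /l1norm mulr_sumr; apply: eq_bigr => r _; rewrite mxE normrM. Qed.

Lemma l1norm_residual_shift n p (A : 'M[R]_(n, p)) (y : 'cV[R]_n) (x d : 'cV[R]_p) (e : R) :
  0 <= e -> l1norm (A *m (x + e *: d) - y) <= l1norm (A *m x - y) + e * l1norm (A *m d).
Proof.
move=> he; rewrite mulmxDr -scalemxAr addrAC -[e in e * _]ger0_norm // -l1normZ.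
exact: l1normD.
Qed.

Lemma l1norm_sqr_le n (v : 'cV[R]_n) :
  l1norm v ^+ 2 <= n%:R * \sum_(r < n) v r 0 ^+ 2.
Proof.
have amgm (a b : R) : 2 * (`|a| * `|b|) <= a ^+ 2 + b ^+ 2.
  rewrite -[a ^+ 2]real_normK ?num_real // -[b ^+ 2]real_normK ?num_real //.
  rewrite -subr_ge0.
  have -> : `|a| ^+ 2 + `|b| ^+ 2 - 2 * (`|a| * `|b|) = (`|a| - `|b|) ^+ 2 by ring.
  exact: sqr_ge0.
rewrite -(ler_pM2l (ltr0Sn R 1)).
have -> : l1norm v ^+ 2 = \sum_r \sum_s `|v r 0| * `|v s 0|.
  by rewrite expr2 /l1norm mulr_suml; apply: eq_bigr => r _; rewrite mulr_sumr.
have -> : 2 * (n%:R * \sum_(r < n) v r 0 ^+ 2)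
    = \sum_(r < n) \sum_(s < n) (v r 0 ^+ 2 + v s 0 ^+ 2).
  under [RHS]eq_bigr do rewrite big_split /= sumr_const card_ord.
  by rewrite big_split /= sumr_const card_ord sumrMnl !mulr_natl mulr2n.
rewrite mulr_sumr; apply: ler_sum => r _; rewrite mulr_sumr; apply: ler_sum => s _.
exact: amgm.
Qed.

End L1Norm.

Section SignedColumns.
Variables (R : realType) (n p : nat) (A : 'M[R]_(n, p)).

Lemma normr_signM (s t : R) : s ^+ 2 = 1 -> 0 <= t -> `|s * t| = t.
Proof.
move=> hs ht; rewrite normrM (ger0_norm ht) [`|s|](_ : _ = 1) ?mul1r //.
by apply/eqP; rewrite -sqrp_eq1 // real_normK ?num_real // hs.
Qed.

(* When [d = 0] its sign is free and is chosen to make [sg c * s * rho] nonnegative. *)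
Lemma exists_aligned_sign (c d rho : R) :
  exists s : R, [/\ s ^+ 2 = 1, d = s * `|d| & rho * Num.sg (c * d) <= Num.sg c * s * rho].
Proof.
have [->|hd] := eqVneq d 0; last first.
  by exists (Num.sg d); rewrite sqr_sg hd -numEsg sgrM mulrC.
exists (if 0 <= Num.sg c * rho then 1 else -1).
rewrite normr0 !mulr0 sgr0 mulr0; split => //; first by case: ifP; rewrite ?sqrrN expr1n.
by rewrite mulrAC; case: ifP; rewrite ?mulr1 ?mulrN1 // => /negbT; rewrite -ltNge oppr_ge0 => /ltW.
Qed.

Definition transfer_dir (i j : 'I_p) (si sj : R) : 'cV[R]_p :=
  sj *: delta_mx j 0 - si *: delta_mx i 0.

Lemma mul_transfer_dirE i j si sj r :
  (A *m transfer_dir i j si sj) r 0 = sj * A r j - si * A r i.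
Proof. by rewrite mulmxBr -!scalemxAr -!colE !mxE. Qed.

Lemma l1norm_transfer_dir_le (i j : 'I_p) (si sj : R) :
  si ^+ 2 = 1 -> sj ^+ 2 = 1 ->
  \sum_(r < n) A r i ^+ 2 = 1 -> \sum_(r < n) A r j ^+ 2 = 1 ->
  l1norm (A *m transfer_dir i j si sj)
    <= Num.sqrt (n%:R * (2 - 2 * si * sj * col_corr A i j)).
Proof.
move=> hsi hsj hAi hAj.
have -> : 2 - 2 * si * sj * col_corr A i j
    = \sum_(r < n) (A *m transfer_dir i j si sj) r 0 ^+ 2.
  under eq_bigr do rewrite mul_transfer_dirE.
  have -> : \sum_(r < n) (sj * A r j - si * A r i) ^+ 2
      = sj ^+ 2 * \sum_(r < n) A r j ^+ 2 + si ^+ 2 * \sum_(r < n) A r i ^+ 2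
        - 2 * si * sj * col_corr A i j.
    rewrite /col_corr !mulr_sumr -big_split -sumrB; apply: eq_bigr => r _ /=; ring.
  by rewrite hAi hAj hsi hsj; ring.
rewrite -(ger0_norm (l1norm_ge0 _)) -sqrtr_sqr.
exact/ler_wsqrtr/l1norm_sqr_le.
Qed.

End SignedColumns.

Lemma owl_l1_minimizer_abs_le (R : realType) (n p : nat) (A : 'M[R]_(n, p))
    (y : 'cV[R]_n) (w : nat -> R) (x : 'cV[R]_p) (i j : 'I_p) :
  (forall l, (l.+1 < p)%N -> w l.+1 <= w l) ->
  (forall k : 'I_p, \sum_(r < n) A r k ^+ 2 = 1) ->
  (forall x' : 'cV[R]_p,
     l1norm (A *m x - y) + owl w x <= l1norm (A *m x' - y) + owl w x') ->
  Num.sqrt (n%:R * (2 - 2 * col_corr A i j * Num.sg (x i 0 * x j 0))) < owl_gap p w ->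
  `|x i 0| <= `|x j 0|.
Proof.
move=> hw hA hmin hij; rewrite leNgt; apply/negP => hlt.
have hneq : i != j by apply: contraTneq hlt => ->; rewrite ltxx.
have hxi : x i 0 != 0 by rewrite -normr_gt0 (le_lt_trans (normr_ge0 _) hlt).
pose si := Num.sg (x i 0).
have hsi : si ^+ 2 = 1 by rewrite sqr_sg hxi.
have [sj [hsj hxj hcorr]] := exists_aligned_sign (x i 0) (x j 0) (col_corr A i j).
rewrite -/si in hcorr.
pose e := (`|x i 0| - `|x j 0|) / 4.
have he : 0 < e by rewrite divr_gt0 ?subr_gt0.
have hxj0 : 0 <= `|x j 0| := normr_ge0 _.
have he4 : 4 * e = `|x i 0| - `|x j 0| by rewrite /e mulrC divfK // pnatr_eq0.
pose x' := x + e *: transfer_dir i j si sj.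
have hx'E k : x' k 0 = x k 0 + e * (sj * (k == j)%:R - si * (k == i)%:R).
  by rewrite !mxE eqxx !andbT.
have hx'i : `|x' i 0| = `|x i 0| - e.
  rewrite hx'E eqxx (negbTE hneq) {1}(numEsg (x i 0)) -/si.
  have -> : si * `|x i 0| + e * (sj * 0%:R - si * 1%:R) = si * (`|x i 0| - e) by ring.
  by rewrite normr_signM //; lra.
have hx'j : `|x' j 0| = `|x j 0| + e.
  rewrite hx'E eqxx eq_sym (negbTE hneq) {1}hxj.
  have -> : sj * `|x j 0| + e * (sj * 1%:R - si * 0%:R) = sj * (`|x j 0| + e) by ring.
  by rewrite normr_signM //; lra.
have hx'k k : k != i -> k != j -> `|x' k 0| = `|x k 0|.
  by move=> /negbTE hki /negbTE hkj; rewrite hx'E hki hkj !mulr0 subr0 mulr0 addr0.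
have [l hl howl] := owl_transfer hw (ltW he) hx'i hx'j hx'k ltac:(lra).
have hgap := owl_gap_le w hl.
set q := 2 - 2 * col_corr A i j * Num.sg (x i 0 * x j 0) in hij.
have hloss : l1norm (A *m x' - y) <= l1norm (A *m x - y) + e * Num.sqrt (n%:R * q).
  apply: le_trans (l1norm_residual_shift A y x _ (ltW he)) _.
  rewrite lerD2l ler_pM2l //.
  apply: le_trans (l1norm_transfer_dir_le hsi hsj (hA i) (hA j)) _.
  by apply/ler_wsqrtr/ler_wpM2l => //; rewrite /q; lra.
have := hmin x'.
have : e * Num.sqrt (n%:R * q) < e * (w l - w l.+1).
  by rewrite ltr_pM2l //; apply: lt_le_trans hij hgap.
lra.
Qed.

Theorem corollary3 (R : realType) (n p : nat) (A : 'M[R]_(n, p)) (y : 'cV[R]_n)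
  (w : nat -> R)
  (hw_noninc : forall l : nat, (l.+1 < p)%N -> w l.+1 <= w l)
  (hw_nneg : forall l : nat, (l < p)%N -> 0 <= w l)
  (hw0 : 0 < w 0%N)
  (hA_center : forall k : 'I_p, \sum_(r < n) A r k = 0)
  (hA_norm : forall k : 'I_p, \sum_(r < n) A r k ^+ 2 = 1)
  (xhat : 'cV[R]_p)
  (hmin : forall x : 'cV[R]_p,
      l1norm (A *m xhat - y) + owl w xhat <= l1norm (A *m x - y) + owl w x)
  (i j : 'I_p)
  (hij : Num.sqrt (n%:R * (2 - 2 * col_corr A i j * Num.sg (xhat i 0 * xhat j 0)))
           < owl_gap p w) :
  `|xhat i 0| = `|xhat j 0|.
Proof.
have hcorr : col_corr A j i = col_corr A i j by apply: eq_bigr => r _; rewrite mulrC.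
have hji : Num.sqrt (n%:R * (2 - 2 * col_corr A j i * Num.sg (xhat j 0 * xhat i 0)))
    < owl_gap p w by rewrite hcorr (mulrC (xhat j 0)).
apply/le_anti/andP; split.
- exact: owl_l1_minimizer_abs_le hw_noninc hA_norm hmin hij.
- exact: owl_l1_minimizer_abs_le hw_noninc hA_norm hmin hji.
Qed.
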